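(* Let $n\ge2$ and let $U^+$ be the subalgebra of $U_{r,s}(\mathfrak{so}_{2n+1})$ generated by $e_1,\dots,e_n$, with root vectors as in the context. Then in $U^+$: (1) $e_l\mathcal E_{i,j}=\mathcal E_{i,j}e_l$ for $i<l<j\le n$; (2) $\mathcal E_{i,l}\mathcal E_{l,j}-(rs)^2\mathcal E_{l,j}\mathcal E_{i,l}=(s^2-r^2)e_l\mathcal E_{i,j}$ for $i<l<j\le n$; (3) $\mathcal E_{i,j}\mathcal E_{k,l}=\mathcal E_{k,l}\mathcal E_{i,j}$ for $i<k\le l<j\le n$; (4) $\mathcal E_{i,j}\mathcal E_{l,j}=s^2\mathcal E_{l,j}\mathcal E_{i,j}$ for $i<l\le j<n$; (5) $\mathcal E_{i,l}\mathcal E_{i,j}=s^2\mathcal E_{i,j}\mathcal E_{i,l}$ for $i\le l<j\le n$; (6) $e_l\mathcal E_{i,j'}=\mathcal E_{i,j'}e_l$ for $i<l$, $l+1<j\le n$; (7) $\mathcal E_{i,l}\mathcal E_{l,j'}-(rs)^2\mathcal E_{l,j'}\mathcal E_{i,l}=(s^2-r^2)e_l\mathcal E_{i,j'}$ for $i<l$, $l+1<j\le n$; (8) $\mathcal E_{i,j'}\mathcal E_{k,l}=\mathcal E_{k,l}\mathcal E_{i,j'}$ for $i<k\le l$, $l+1<j\le n$; (9) $\mathcal E_{i,l}\mathcal E_{i,j'}=s^2\mathcal E_{i,j'}\mathcal E_{i,l}$ for $i\le l$, $l+1<j\le n$.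
   Context: Let $r,s\in\mathbb C^*$ with $r^3\ne s^3$, $r^4\ne s^4$, $\mathbb K=\mathbb Q(r,s)$. $U_{r,s}(\mathfrak{so}_{2n+1})$ is the $\mathbb K$-algebra generated by $e_i,f_i,\omega_i^{\pm1},\omega_i'^{\pm1}$ ($1\le i\le n$) with: $\omega$'s commute, invertible; $\omega_je_i\omega_j^{-1}=\langle\omega_i',\omega_j\rangle e_i$, $\omega_jf_i\omega_j^{-1}=\langle\omega_i',\omega_j\rangle^{-1}f_i$, $\omega_j'e_i\omega_j'^{-1}=\langle\omega_j',\omega_i\rangle^{-1}e_i$, $\omega_j'f_i\omega_j'^{-1}=\langle\omega_j',\omega_i\rangle f_i$, where $\langle\omega_i',\omega_i\rangle=r^2s^{-2}$ ($i<n$), $\langle\omega_n',\omega_n\rangle=rs^{-1}$, $\langle\omega_i',\omega_{i+1}\rangle=r^{-2}$, $\langle\omega_{i+1}',\omega_i\rangle=s^2$ ($i<n$), others $1$; $e_if_j-f_je_i=\delta_{ij}(\omega_i-\omega_i')/(r_i-s_i)$ ($r_i=r^2,s_i=s^2$ for $i<n$; $r_n=r,s_n=s$); Serre relations $(\mathrm{ad}_le_i)^{1-a_{ij}}(e_j)=0=(\mathrm{ad}_rf_i)^{1-a_{ij}}(f_j)$, $i\ne j$, with $(a_{ij})$ the $B_n$ Cartan matrix ($a_{ii}=2$, $a_{i,i+1}=a_{i+1,i}=-1$ for $i\le n-2$, $a_{n-1,n}=-1$, $a_{n,n-1}=-2$, else $0$), $\mathrm{ad}_l(a)(b)=\sum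 a_{(1)}bS(a_{(2)})$, $\mathrm{ad}_r(a)(b)=\sum S(a_{(1)})ba_{(2)}$, for the Hopf structure $\Delta(\omega)=\omega\otimes\omega$, $\Delta(e_i)=e_i\otimes1+\omega_i\otimes e_i$, $\Delta(f_i)=1\otimes f_i+f_i\otimes\omega_i'$, $S(e_i)=-\omega_i^{-1}e_i$, $S(f_i)=-f_i\omega_i'^{-1}$. Root vectors: $\mathcal E_{i,i}=e_i$, $\mathcal E_{i,j}=e_i\mathcal E_{i+1,j}-r^2\mathcal E_{i+1,j}e_i$ ($1\le i<j\le n$), $\mathcal E_{i,n'}=\mathcal E_{i,n}e_n-rs\,e_n\mathcal E_{i,n}$ ($i\le n-1$), $\mathcal E_{i,j'}=\mathcal E_{i,(j+1)'}e_j-s^{-2}e_j\mathcal E_{i,(j+1)'}$ ($1\le i<j\le n-1$). *)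

From HB Require Import structures.
From mathcomp Require Import all_boot all_order all_algebra.
From mathcomp Require Import reals complex.
Set Implicit Arguments. Unset Strict Implicit. Unset Printing Implicit Defensive.
Import Order.TTheory GRing.Theory Num.Theory.
Local Open Scope ring_scope.

Section TwoParam.
Variable (F : fieldType) (A : algType F).
Variables (n : nat) (r s : F).

(* <omega'_i, omega_j> for the B_n two-parameter datum, indices 1..n *)
Definition pairing (i j : nat) : F :=
  if (i == j) then (if i == n then r / s else r ^+ 2 / s ^+ 2)
  else if (j == i.+1) && (i < n)%N then (r ^+ 2)^-1
  else if (i == j.+1) && (j < n)%N then s ^+ 2
  else 1.

Definition rsdiff (i : nat) : F := if i == n then r - s else r ^+ 2 - s ^+ 2.

(* 1 - a_ij for i <> j, B_n Cartan matrix (indices 1..n) *)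
Definition serre_exp (i j : nat) : nat :=
  if j == i.+1 then 2%N
  else if i == j.+1 then (if i == n then 3%N else 2%N)
  else 1%N.

(* ad_l(e_i)(b) = e_i b S(1) + omega_i b S(e_i) = e_i b - omega_i b omega_i^{-1} e_i *)
Definition adl (ei wi wiinv b : A) : A := ei * b - wi * b * wiinv * ei.
(* ad_r(f_i)(b) = S(1) b f_i + S(f_i) b omega'_i = b f_i - f_i omega'_i^{-1} b omega'_i *)
Definition adr (fi wi' wi'inv b : A) : A := b * fi - fi * wi'inv * b * wi'.

Definition Urs_relations (e f w winv w' w'inv : nat -> A) : Prop :=
  [/\ (forall i, (1 <= i <= n)%N ->
        [/\ w i * winv i = 1, winv i * w i = 1, w' i * w'inv i = 1 & w'inv i * w' i = 1]),
      (forall i j, (1 <= i <= n)%N -> (1 <= j <= n)%N ->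
        [/\ w i * w j = w j * w i, w' i * w' j = w' j * w' i & w i * w' j = w' j * w i]),
      (forall i j, (1 <= i <= n)%N -> (1 <= j <= n)%N ->
        [/\ w j * e i * winv j = pairing i j *: e i,
            w j * f i * winv j = (pairing i j)^-1 *: f i,
            w' j * e i * w'inv j = (pairing j i)^-1 *: e i &
            w' j * f i * w'inv j = pairing j i *: f i]),
      (forall i j, (1 <= i <= n)%N -> (1 <= j <= n)%N ->
        e i * f j - f j * e i = if i == j then (rsdiff i)^-1 *: (w i - w' i) else 0) &
      (forall i j, (1 <= i <= n)%N -> (1 <= j <= n)%N -> i != j ->
        iter (serre_exp i j) (adl (e i) (w i) (winv i)) (e j) = 0 /\
        iter (serre_exp i j) (adr (f i) (w' i) (w'inv i)) (f j) = 0)].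

Fixpoint Eaux (e : nat -> A) (k i : nat) : A :=
  match k with
  | 0 => e i
  | k'.+1 => e i * Eaux e k' i.+1 - r ^+ 2 *: (Eaux e k' i.+1 * e i)
  end.
Definition E (e : nat -> A) (i j : nat) : A := Eaux e (j - i) i.

(* E_{i,n'} = E_{i,n} e_n - rs e_n E_{i,n};
   E_{i,j'} = E_{i,(j+1)'} e_j - s^{-2} e_j E_{i,(j+1)'}.  Recursion on k = n - j. *)
Fixpoint E'aux (e : nat -> A) (k i : nat) : A :=
  match k with
  | 0 => E e i n * e n - (r * s) *: (e n * E e i n)
  | k'.+1 => E'aux e k' i * e (n - k'.+1)%N
             - (s ^+ 2)^-1 *: (e (n - k'.+1)%N * E'aux e k' i)
  end.
Definition E' (e : nat -> A) (i j : nat) : A := E'aux e (n - j) i.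

End TwoParam.

From HB Require Import structures.
From mathcomp Require Import all_boot all_order all_algebra.
From mathcomp Require Import reals complex.
From mathcomp Require Import ring zify.
Import Order.TTheory GRing.Theory Num.Theory.
Local Open Scope ring_scope.
Set Implicit Arguments. Unset Strict Implicit. Unset Printing Implicit Defensive.

(* All nine relations follow from three consequences of the defining relations:
   e_i e_j = e_j e_i for |i - j| > 1, and the quantum Serre relations in the form
   e_k E_{k,k+1} = s^2 E_{k,k+1} e_k and E_{k,k+1} e_{k+1} = s^2 e_{k+1} E_{k,k+1}.
   Writing root vectors as iterated q-commutators [x, y]_c = xy - c yx, the
   q-Jacobi identity splits E_{i,j} = [E_{i,l}, E_{l+1,j}]_{r^2} at any l, and each
   relation follows by induction on the length of the root vector, since an
   element that q-commutes with x and y also q-commutes with [x, y]_c.  The one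
   step that is not formal is e_{k+1} E_{k,k+2} = E_{k,k+2} e_{k+1}, where
   r^2 + s^2 has to be inverted. *)

(* Identities in an algebra are decided by reflection into noncommutative
   polynomials: a monomial is a coefficient together with a word of atom
   indices, and an identity holds once every coefficient of the collected
   difference vanishes; those scalar goals are left to [ring]. *)
Section NoncommutativePolynomials.
Variables (F : fieldType) (A : algType F).

Inductive ncterm : Type :=
  | NCAtom of nat
  | NCZero
  | NCOne
  | NCAdd of ncterm & ncterm
  | NCOpp of ncterm
  | NCMul of ncterm & ncterm
  | NCScale of F & ncterm.

Variable env : seq A.

Fixpoint ncterm_eval (t : ncterm) : A :=
  match t with
  | NCAtom k => env`_k
  | NCZero => 0
  | NCOne => 1
  | NCAdd a b => ncterm_eval a + ncterm_eval b
  | NCOpp a => - ncterm_eval a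
  | NCMul a b => ncterm_eval a * ncterm_eval b
  | NCScale c a => c *: ncterm_eval a
  end.

Definition word_eval (w : seq nat) : A := \prod_(k <- w) env`_k.

Definition ncpoly_eval (p : seq (F * seq nat)) : A :=
  \sum_(m <- p) m.1 *: word_eval m.2.

Fixpoint ncnorm (t : ncterm) : seq (F * seq nat) :=
  match t with
  | NCAtom k => [:: (1, [:: k])]
  | NCZero => [::]
  | NCOne => [:: (1, [::])]
  | NCAdd a b => ncnorm a ++ ncnorm b
  | NCOpp a => [seq (- m.1, m.2) | m <- ncnorm a]
  | NCMul a b => [seq (m.1 * m'.1, m.2 ++ m'.2) | m <- ncnorm a, m' <- ncnorm b]
  | NCScale c a => [seq (c * m.1, m.2) | m <- ncnorm a]
  end.

Fixpoint word_eqb (w1 w2 : seq nat) : bool :=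
  match w1, w2 with
  | [::], [::] => true
  | k1 :: w1', k2 :: w2' => eqn k1 k2 && word_eqb w1' w2'
  | _, _ => false
  end.

Fixpoint ncpoly_insert (m : F * seq nat) (p : seq (F * seq nat)) :=
  if p is m' :: p' then
    if word_eqb m.2 m'.2 then (m.1 + m'.1, m'.2) :: p' else m' :: ncpoly_insert m p'
  else [:: m].

Definition ncpoly_collect (p : seq (F * seq nat)) := foldr ncpoly_insert [::] p.

Definition coefs_eq0 (p : seq (F * seq nat)) : Prop :=
  foldr (fun m P => m.1 = 0 /\ P) True p.

Lemma word_eqbP w1 w2 : word_eqb w1 w2 -> w1 = w2.
Proof. by elim: w1 w2 => [|k1 w1 IH] [|k2 w2] //= /andP[/eqnP-> /IH->]. Qed.

Lemma ncnorm_eval t : ncterm_eval t = ncpoly_eval (ncnorm t).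
Proof.
rewrite /ncpoly_eval; elim: t => [k| | |a IHa b IHb|a IH|a IHa b IHb|c a IH] /=.
- by rewrite big_seq1 /word_eval big_seq1 scale1r.
- by rewrite big_nil.
- by rewrite big_seq1 /word_eval big_nil scale1r.
- by rewrite big_cat IHa IHb.
- by rewrite big_map IH -sumrN; apply: eq_bigr => m _; rewrite scaleNr.
- rewrite IHa IHb mulr_suml big_allpairs_dep; apply: eq_bigr => m _.
  rewrite mulr_sumr; apply: eq_bigr => m' _.
  by rewrite /word_eval big_cat -scalerAl -scalerAr scalerA.
- by rewrite big_map IH scaler_sumr; apply: eq_bigr => m _; rewrite scalerA.
Qed.

Lemma ncpoly_collect_eval p : ncpoly_eval (ncpoly_collect p) = ncpoly_eval p.
Proof.
rewrite /ncpoly_eval; elim: p => [|m p IH] //=; rewrite big_cons -IH.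
elim: (ncpoly_collect p) => [|m' q IHq] /=; first by rewrite big_seq1 big_nil addr0.
case: ifP => [/word_eqbP eq_w|_]; rewrite !big_cons.
  by rewrite /= eq_w scalerDl addrA.
by rewrite IHq addrCA.
Qed.

Lemma coefs_eq0_eval p : coefs_eq0 p -> ncpoly_eval p = 0.
Proof.
rewrite /ncpoly_eval; elim: p => [|m p IH] /=; first by rewrite big_nil.
by case=> m0 /IH; rewrite big_cons m0 scale0r add0r.
Qed.

Lemma ncterm_eq t1 t2 :
  coefs_eq0 (ncpoly_collect (ncnorm (NCAdd t1 (NCOpp t2)))) ->
  ncterm_eval t1 = ncterm_eval t2.
Proof.
move/coefs_eq0_eval; rewrite ncpoly_collect_eval -ncnorm_eval /=.
exact: subr0_eq.
Qed.

End NoncommutativePolynomials.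

Ltac nc_index x env :=
  lazymatch env with
  | x :: _ => constr:(0%N)
  | _ :: ?l => let k := nc_index x l in constr:(k.+1)
  end.

Ltac nc_reify F env t :=
  lazymatch t with
  | ?a + ?b => let x := nc_reify F env a in let y := nc_reify F env b in constr:(NCAdd x y)
  | - ?a => let x := nc_reify F env a in constr:(NCOpp x)
  | ?a * ?b => let x := nc_reify F env a in let y := nc_reify F env b in constr:(NCMul x y)
  | ?c *: ?a => let x := nc_reify F env a in constr:(NCScale c x)
  | 0 => constr:(@NCZero F)
  | 1 => constr:(@NCOne F)
  | _ => let k := nc_index t env in constr:(@NCAtom F k)
  end.

Ltac nc F env :=
  lazymatch goal with |- ?x = ?y =>
    let tx := nc_reify F env x in let ty := nc_reify F env y in
    refine (@ncterm_eq F _ env tx ty _);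
    cbn [ncpoly_collect ncpoly_insert word_eqb eqn andb ncnorm cat map allpairs
         allpairs_dep flatten foldr coefs_eq0 fst snd];
    repeat split
  end.

Lemma subr0_of_eq (V : zmodType) (x y : V) : x = y -> x - y = 0.
Proof. by move->; rewrite subrr. Qed.

Section QCommutator.
Variables (F : fieldType) (A : algType F).

Definition qcomm (x y : A) (c : F) : A := x * y - c *: (y * x).

Lemma qcommZr (a b : A) k c : qcomm a (k *: b) c = k *: qcomm a b c.
Proof. by rewrite /qcomm -scalerAl -scalerAr scalerA mulrC -scalerA -scalerBr. Qed.

Lemma qcommZl (a b : A) k c : qcomm (k *: a) b c = k *: qcomm a b c.
Proof. by rewrite /qcomm -scalerAl -scalerAr scalerA mulrC -scalerA -scalerBr. Qed.

Lemma qcommV (a b : A) c : c != 0 -> qcomm a b c = - c *: qcomm b a c^-1.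
Proof.
by move=> c0; rewrite /qcomm scalerBr scalerA mulNr mulfV // scaleN1r opprK scaleNr addrC.
Qed.

Lemma qcomm_swap (a b : A) p q : qcomm a (qcomm a b p) q = qcomm a (qcomm a b q) p.
Proof. by rewrite /qcomm; nc F [:: a; b]; ring. Qed.

Lemma qcomm_qcommute x (a b : A) c al be :
  x * a = al *: (a * x) -> x * b = be *: (b * x) ->
  x * qcomm a b c = (al * be) *: (qcomm a b c * x).
Proof.
move=> /subr0_of_eq xa /subr0_of_eq xb; apply: subr0_eq.
transitivity ((x * a - al *: (a * x)) * b + al *: (a * (x * b - be *: (b * x)))
  - c *: ((x * b - be *: (b * x)) * a + be *: (b * (x * a - al *: (a * x))))).
  by rewrite /qcomm; nc F [:: x; a; b]; ring.
by rewrite xa xb ?(mul0r, mulr0, scaler0, oppr0, addr0).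
Qed.

Lemma qcomm_qcommute_r x (a b : A) c al be :
  a * x = al *: (x * a) -> b * x = be *: (x * b) ->
  qcomm a b c * x = (al * be) *: (x * qcomm a b c).
Proof.
move=> /subr0_of_eq ax /subr0_of_eq bx; apply: subr0_eq.
transitivity (a * (b * x - be *: (x * b)) + be *: ((a * x - al *: (x * a)) * b)
  - c *: (b * (a * x - al *: (x * a)) + al *: ((b * x - be *: (x * b)) * a))).
  by rewrite /qcomm; nc F [:: x; a; b]; ring.
by rewrite ax bx ?(mul0r, mulr0, scaler0, oppr0, addr0).
Qed.

Lemma qcomm_comm x (a b : A) c : x * a = a * x -> x * b = b * x ->
  x * qcomm a b c = qcomm a b c * x.
Proof.
by move=> xa xb; rewrite (@qcomm_qcommute x a b c 1 1) ?mulr1 ?scale1r.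
Qed.

Lemma qcommA (a b c : A) x y : a * c = c * a ->
  qcomm a (qcomm b c x) y = qcomm (qcomm a b y) c x.
Proof.
move=> /subr0_of_eq ac; apply: subr0_eq.
transitivity (- x *: ((a * c - c * a) * b) + y *: (b * (a * c - c * a))).
  by rewrite /qcomm; nc F [:: a; b; c]; ring.
by rewrite ac ?(mul0r, mulr0, scaler0, oppr0, addr0).
Qed.

Lemma qcomm_mull (u X y : A) c : u * y = y * u -> u * qcomm X y c = qcomm (u * X) y c.
Proof.
move=> /subr0_of_eq uy; apply: subr0_eq.
transitivity (- c *: ((u * y - y * u) * X)).
  by rewrite /qcomm; nc F [:: u; X; y]; ring.
by rewrite uy ?(mul0r, mulr0, scaler0, oppr0, addr0).
Qed.

Lemma qcomm_qcommDl (u v X y : A) c d : u * y = y * u -> v * y = y * v ->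
  u * qcomm X y c - d *: (qcomm X y c * v) = qcomm (u * X - d *: (X * v)) y c.
Proof.
move=> /subr0_of_eq uy /subr0_of_eq vy; apply: subr0_eq.
transitivity (- c *: ((u * y - y * u) * X) + d *: (X * (v * y - y * v))).
  by rewrite /qcomm; nc F [:: u; v; X; y]; ring.
by rewrite uy vy ?(mul0r, mulr0, scaler0, oppr0, addr0).
Qed.

End QCommutator.

Lemma nat_ind_down (P : nat -> Prop) m n :
  ((m <= n)%N -> P n) -> (forall j, (m <= j < n)%N -> P j.+1 -> P j) ->
  forall j, (m <= j <= n)%N -> P j.
Proof.
move=> Pn step j; move: {2}(n - j)%N (erefl (n - j)%N) => k.
elim: k j => [|k IHk] j hk hj; first by have -> : j = n; [lia | apply: Pn; lia].
by apply: step; [lia | apply: IHk; lia].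
Qed.

Section RootVectors.
Variables (F : fieldType) (A : algType F) (n : nat) (r s : F) (e : nat -> A).
Local Notation Ep := (E r e).
Local Notation Epp := (E' n r s e).

Lemma E_diag i : Ep i i = e i.
Proof. by rewrite /E subnn. Qed.

Lemma E_rec i j : (i < j)%N -> Ep i j = qcomm (e i) (Ep i.+1 j) (r ^+ 2).
Proof. by move=> lt_ij; rewrite /E (_ : (j - i = (j - i.+1).+1)%N) //; lia. Qed.

Lemma E_comm x i j : (i <= j)%N ->
  (forall m, (i <= m <= j)%N -> x * e m = e m * x) -> x * Ep i j = Ep i j * x.
Proof.
move=> le_ij; have [k ->] : exists k, j = (i + k)%N by exists (j - i)%N; lia.
rewrite /E addKn; elim: k i {le_ij} => [|k IH] i x_e /=; first by apply: x_e; lia.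
by apply: qcomm_comm; [apply: x_e | apply: IH => m hm; apply: x_e]; lia.
Qed.

Lemma E'_n i : Epp i n = qcomm (Ep i n) (e n) (r * s).
Proof. by rewrite /E' subnn. Qed.

Lemma E'_rec i j : (j < n)%N -> Epp i j = qcomm (Epp i j.+1) (e j) (s ^+ 2)^-1.
Proof.
move=> lt_jn; rewrite /E' (_ : (n - j = (n - j.+1).+1)%N); last lia.
by rewrite /= (_ : (n - (n - j.+1).+1 = j)%N) //; lia.
Qed.

End RootVectors.

Section RootVectorRelations.
Variables (F : fieldType) (A : algType F) (n : nat) (r s : F) (e : nat -> A).
Hypothesis r2s2_neq0 : r ^+ 2 + s ^+ 2 != 0.
Hypothesis e_comm_far :
  forall i j, (1 <= i)%N -> (i.+1 < j <= n)%N -> e i * e j = e j * e i.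
Hypothesis serre_left : forall k, (1 <= k < n)%N ->
  e k * E r e k k.+1 = s ^+ 2 *: (E r e k k.+1 * e k).
Hypothesis serre_right : forall k, (1 <= k)%N -> (k.+2 <= n)%N ->
  E r e k k.+1 * e k.+1 = s ^+ 2 *: (e k.+1 * E r e k k.+1).

Local Notation Ep := (E r e).
Local Notation Epp := (E' n r s e).

Lemma e_comm_E_far_left m i j : (1 <= m)%N -> (m.+1 < i <= j)%N -> (j <= n)%N ->
  e m * Ep i j = Ep i j * e m.
Proof. by move=> *; apply: E_comm => [|k hk]; [lia | apply: e_comm_far; lia]. Qed.

Lemma e_comm_E_far_right m i j : (1 <= i <= j)%N -> (j.+1 < m <= n)%N ->
  e m * Ep i j = Ep i j * e m.
Proof. by move=> *; apply: E_comm => [|k hk]; [lia | symmetry; apply: e_comm_far; lia]. Qed.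

Lemma E_split i l j : (1 <= i <= l)%N -> (l < j <= n)%N ->
  Ep i j = qcomm (Ep i l) (Ep l.+1 j) (r ^+ 2).
Proof.
move=> /andP[hi le_il]; have [d ->] : exists d, l = (i + d)%N by exists (l - i)%N; lia.
elim: d i hi {le_il} => [|d IH] i hi hlj; first by rewrite addn0 E_diag [LHS]E_rec //; lia.
rewrite E_rec; last lia.
rewrite (IH i.+1) //; last lia.
rewrite qcommA; last by apply: e_comm_E_far_left; lia.
by rewrite -E_rec ?addSnnS //; lia.
Qed.

Lemma e_comm_E_adjacent k : (1 <= k)%N -> (k.+2 <= n)%N ->
  e k.+1 * Ep k k.+2 = Ep k k.+2 * e k.+1.
Proof.
move=> hk hkn.
have /subr0_of_eq Sl := serre_left (k := k.+1) (ltac:(lia)).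
have /subr0_of_eq Sr := serre_right hk hkn.
have /subr0_of_eq ac := e_comm_far (j := k.+2) hk (ltac:(lia)).
rewrite E_rec // E_diag in Sl; rewrite E_rec // E_diag in Sr.
rewrite E_rec // E_rec // E_diag.
move: Sl Sr ac; set a := e k; set b := e k.+1; set c := e k.+2 => Sl Sr ac.
apply: subr0_eq; apply: (scalerI r2s2_neq0); rewrite scaler0.
(* (r^2 + s^2) [e_{k+1}, E_{k,k+2}] as a two-sided combination of the relations. *)
transitivity (a * (b * qcomm b c (r ^+ 2) - s ^+ 2 *: (qcomm b c (r ^+ 2) * b))
  - r ^+ 4 *: ((b * qcomm b c (r ^+ 2) - s ^+ 2 *: (qcomm b c (r ^+ 2) * b)) * a)
  + r ^+ 4 *: (c * (qcomm a b (r ^+ 2) * b - s ^+ 2 *: (b * qcomm a b (r ^+ 2))))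
  - (qcomm a b (r ^+ 2) * b - s ^+ 2 *: (b * qcomm a b (r ^+ 2))) * c
  - (r ^+ 4 - (r ^+ 2 + s ^+ 2) * r ^+ 2) *: (b * b * (a * c - c * a))
  + r ^+ 4 *: ((a * c - c * a) * b * b)
  - ((r ^+ 2 + s ^+ 2) * r ^+ 2) *: (b * (a * c - c * a) * b)).
  by rewrite /qcomm; nc F [:: a; b; c]; ring.
by rewrite Sl Sr ac ?(mul0r, mulr0, scaler0, oppr0, addr0).
Qed.

Lemma e_comm_E_succ k j : (1 <= k)%N -> (k.+2 <= j <= n)%N ->
  e k.+1 * Ep k j = Ep k j * e k.+1.
Proof.
move=> hk /andP[]; elim: j => // j IH hkj hjn.
have [ej|lt_kj] := eqVneq j k.+1; first by rewrite ej; apply: e_comm_E_adjacent; lia.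
rewrite (@E_split k j); [|lia|lia].
by rewrite [Ep j.+1 j.+1]E_diag; apply: qcomm_comm; [apply: IH | apply: e_comm_far]; lia.
Qed.

Lemma e_comm_E i l j : (1 <= i)%N -> (i < l < j)%N -> (j <= n)%N ->
  e l * Ep i j = Ep i j * e l.
Proof.
move=> hi /andP[lt_il]; have [d ->] : exists d, l = (i + d.+1)%N by exists (l - i.+1)%N; lia.
elim: d i hi {lt_il} => [|d IH] i hi hlj hjn; first by rewrite addn1 e_comm_E_succ //; lia.
rewrite E_rec; last lia.
apply: qcomm_comm; first by symmetry; apply: e_comm_far; lia.
by rewrite -addSnnS; apply: IH; lia.
Qed.

Lemma E_comm_nested i k l j : (1 <= i)%N -> (i < k <= l)%N -> (l < j <= n)%N ->
  Ep i j * Ep k l = Ep k l * Ep i j.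
Proof.
move=> *; apply: E_comm => [|m hm]; first lia.
by symmetry; apply: e_comm_E; lia.
Qed.

Lemma e_qcomm_E i j : (1 <= i)%N -> (i < j <= n)%N -> e i * Ep i j = s ^+ 2 *: (Ep i j * e i).
Proof.
move=> hi hij; have [ej|lt_ij] := eqVneq j i.+1; first by rewrite ej; apply: serre_left; lia.
rewrite (@E_split i i.+1); [|lia|lia].
rewrite -[s ^+ 2]mulr1; apply: qcomm_qcommute; first by apply: serre_left; lia.
by rewrite scale1r; apply: e_comm_E_far_left; lia.
Qed.

Lemma E_qcomm_e i k : (1 <= i <= k)%N -> (k.+2 <= n)%N ->
  Ep i k.+1 * e k.+1 = s ^+ 2 *: (e k.+1 * Ep i k.+1).
Proof.
move=> hik hkn; have [ei|lt_ik] := eqVneq i k; first by rewrite ei; apply: serre_right; lia.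
rewrite (@E_split i k.-1); [|lia|lia]; rewrite prednK; last lia.
rewrite -[s ^+ 2]mul1r; apply: qcomm_qcommute_r; last by apply: serre_right; lia.
by rewrite scale1r; symmetry; apply: e_comm_E_far_right; lia.
Qed.

Lemma E_qcomm_left i l j : (1 <= i)%N -> (i <= l < j)%N -> (j <= n)%N ->
  Ep i l * Ep i j = s ^+ 2 *: (Ep i j * Ep i l).
Proof.
move=> hi hilj hjn; have [ei|lt_il] := eqVneq i l; first by rewrite -ei E_diag e_qcomm_E //; lia.
rewrite (@E_rec _ _ r e i l); last lia.
rewrite -[s ^+ 2]mulr1; apply: qcomm_qcommute_r; first by apply: e_qcomm_E; lia.
by rewrite scale1r; symmetry; apply: E_comm_nested; lia.
Qed.

Lemma E_qcomm_right i l j : (1 <= i)%N -> (i < l <= j)%N -> (j < n)%N ->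
  Ep i j * Ep l j = s ^+ 2 *: (Ep l j * Ep i j).
Proof.
move=> hi hilj hjn; have [k ej] : exists k, j = k.+1 by exists j.-1; lia.
subst j.
have [el|lt_lk] := eqVneq l k.+1; first by rewrite el E_diag E_qcomm_e //; lia.
rewrite (@E_split l k); [|lia|lia].
rewrite E_diag -[s ^+ 2]mul1r; apply: qcomm_qcommute; last by apply: E_qcomm_e; lia.
by rewrite scale1r; apply: E_comm_nested; lia.
Qed.

Lemma E_overlap_qcomm i l j : (1 <= i)%N -> (i < l < j)%N -> (j <= n)%N ->
  Ep i l * Ep l j - (r * s) ^+ 2 *: (Ep l j * Ep i l) = (s ^+ 2 - r ^+ 2) *: (e l * Ep i j).
Proof.
move=> hi hilj hjn; have [k el] : exists k, l = k.+1 by exists l.-1; lia.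
subst l.
have /subr0_of_eq elE := e_qcomm_E (i := k.+1) (j := j) isT (ltac:(lia)).
have /subr0_of_eq eE := e_comm_E hi hilj hjn.
rewrite (@E_split i k j) in eE *; [|lia|lia].
rewrite (@E_split i k k.+1); [|lia|lia].
rewrite [Ep k.+1 k.+1]E_diag.
move: elE eE; set a := Ep i k; set b := e k.+1; set c := Ep k.+1 j => elE eE.
apply: subr0_eq; transitivity (a * (b * c - s ^+ 2 *: (c * b))
  - r ^+ 4 *: ((b * c - s ^+ 2 *: (c * b)) * a)
  - s ^+ 2 *: (b * qcomm a c (r ^+ 2) - qcomm a c (r ^+ 2) * b)).
  by rewrite /qcomm; nc F [:: a; b; c]; ring.
by rewrite elE eE ?(mul0r, mulr0, scaler0, oppr0, addr0).
Qed.

Lemma e_comm_E' i l j : (1 <= i)%N -> (i < l)%N -> (l.+1 < j <= n)%N ->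
  e l * Epp i j = Epp i j * e l.
Proof.
move=> hi hil; move: j; apply: nat_ind_down => [hln|k hk IH].
  by rewrite E'_n; apply: qcomm_comm; [apply: e_comm_E | apply: e_comm_far]; lia.
rewrite E'_rec; last lia.
by apply: qcomm_comm => //; apply: e_comm_far; lia.
Qed.

Lemma E_E'_overlap_qcomm i l j : (1 <= i)%N -> (i < l)%N -> (l.+1 < j <= n)%N ->
  Ep i l * Epp l j - (r * s) ^+ 2 *: (Epp l j * Ep i l) = (s ^+ 2 - r ^+ 2) *: (e l * Epp i j).
Proof.
move=> hi hil; move: j; apply: nat_ind_down => [hln|k hk IH].
  rewrite !E'_n qcomm_qcommDl; try by symmetry; apply: e_comm_E_far_right; lia.
  rewrite E_overlap_qcomm; [|lia|lia|lia].
  by rewrite qcommZl qcomm_mull //; apply: e_comm_far; lia.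
rewrite [Epp l k]E'_rec; last lia.
rewrite [Epp i k]E'_rec; last lia.
rewrite qcomm_qcommDl; try by symmetry; apply: e_comm_E_far_right; lia.
by rewrite IH qcommZl qcomm_mull //; apply: e_comm_far; lia.
Qed.

Lemma E'_comm_nested i k l j : (1 <= i)%N -> (i < k <= l)%N -> (l.+1 < j <= n)%N ->
  Epp i j * Ep k l = Ep k l * Epp i j.
Proof.
move=> hi hkl; move: j; apply: nat_ind_down => [hln|m hm IH]; symmetry.
  rewrite E'_n; apply: qcomm_comm; first by symmetry; apply: E_comm_nested; lia.
  by symmetry; apply: e_comm_E_far_right; lia.
rewrite E'_rec; last lia.
apply: qcomm_comm; first by symmetry.
by symmetry; apply: e_comm_E_far_right; lia.
Qed.

Lemma E_E'_qcomm_left i l j : (1 <= i)%N -> (i <= l)%N -> (l.+1 < j <= n)%N ->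
  Ep i l * Epp i j = s ^+ 2 *: (Epp i j * Ep i l).
Proof.
move=> hi hil; move: j; apply: nat_ind_down => [hln|k hk IH]; rewrite -[s ^+ 2]mulr1.
  rewrite E'_n; apply: qcomm_qcommute; first by apply: E_qcomm_left; lia.
  by rewrite scale1r; symmetry; apply: e_comm_E_far_right; lia.
rewrite E'_rec; last lia.
apply: qcomm_qcommute; first exact: IH.
by rewrite scale1r; symmetry; apply: e_comm_E_far_right; lia.
Qed.

End RootVectorRelations.

Section SerreOperators.
Variables (F : fieldType) (A : algType F).

Lemma adl_iter1 (w winv ei ej : A) p : w * ej * winv = p *: ej ->
  iter 1 (adl ei w winv) ej = qcomm ei ej p.
Proof. by move=> wej; rewrite /= /adl wej -scalerAl. Qed.

Lemma adl_iter2 (w winv ei ej : A) pi pj : winv * w = 1 ->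
  w * ei * winv = pi *: ei -> w * ej * winv = pj *: ej ->
  iter 2 (adl ei w winv) ej = qcomm ei (qcomm ei ej pj) (pi * pj).
Proof.
move=> winvK wei wej.
have conjM x y : w * (x * y) * winv = (w * x * winv) * (w * y * winv).
  by rewrite !mulrA -(mulrA _ winv w) winvK mulr1.
have wE : w * qcomm ei ej pj * winv = (pi * pj) *: qcomm ei ej pj.
  rewrite /qcomm mulrBr mulrBl -scalerAr -scalerAl !conjM wei wej.
  by rewrite -!scalerAl -!scalerAr !scalerA scalerBr scalerA (mulrC (pj * pj)) mulrA.
by rewrite /= /adl wej -scalerAl -/(qcomm ei ej pj) wE -scalerAl.
Qed.

End SerreOperators.

Section DefiningRelations.
Variables (F : fieldType) (A : algType F) (n : nat) (r s : F).
Variables (e f w winv w' w'inv : nat -> A).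
Hypothesis hU : Urs_relations n r s e f w winv w' w'inv.

Lemma pairing_far i j : (i.+1 < j)%N -> pairing n r s j i = 1.
Proof.
move=> lt_ij; rewrite /pairing.
have -> : (j == i) = false by lia.
have -> : (i == j.+1) = false by lia.
by have -> : (j == i.+1) = false by lia.
Qed.

Lemma pairing_up k : (k < n)%N -> pairing n r s k.+1 k = s ^+ 2.
Proof.
move=> lt_kn; rewrite /pairing eqxx lt_kn.
have -> : (k.+1 == k) = false by lia.
by have -> : (k == k.+2) = false by lia.
Qed.

Lemma pairing_down k : (k < n)%N -> pairing n r s k k.+1 = (r ^+ 2)^-1.
Proof.
move=> lt_kn; rewrite /pairing eqxx lt_kn.
by have -> : (k == k.+1) = false by lia.
Qed.

Lemma pairing_diag k : k != n -> pairing n r s k k = r ^+ 2 / s ^+ 2.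
Proof. by move=> /negbTE kn; rewrite /pairing eqxx kn. Qed.

Lemma serre_exp_far i j : (i.+1 < j)%N -> serre_exp n i j = 1%N.
Proof.
move=> lt_ij; rewrite /serre_exp.
have -> : (j == i.+1) = false by lia.
by have -> : (i == j.+1) = false by lia.
Qed.

Lemma serre_exp_up k : serre_exp n k k.+1 = 2%N.
Proof. by rewrite /serre_exp eqxx. Qed.

Lemma serre_exp_down k : k.+1 != n -> serre_exp n k.+1 k = 2%N.
Proof.
move=> /negbTE kn; rewrite /serre_exp eqxx kn.
by have -> : (k == k.+2) = false by lia.
Qed.

Lemma Urs_e_comm_far i j : (1 <= i)%N -> (i.+1 < j <= n)%N -> e i * e j = e j * e i.
Proof.
move=> hi hij; case: hU => _ _ w_conj _ serre.
have [wej _ _ _] := w_conj j i (ltac:(lia)) (ltac:(lia)).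
have [+ _] := serre i j (ltac:(lia)) (ltac:(lia)) (ltac:(lia)).
rewrite serre_exp_far; last lia.
rewrite (adl_iter1 (e i) wej) pairing_far; last lia.
by rewrite /qcomm scale1r => /subr0_eq.
Qed.

Lemma Urs_serre2 i j : (1 <= i <= n)%N -> (1 <= j <= n)%N -> i != j ->
  serre_exp n i j = 2%N ->
  qcomm (e i) (qcomm (e i) (e j) (pairing n r s j i))
    (pairing n r s i i * pairing n r s j i) = 0.
Proof.
move=> hi hj ij exp2; case: hU => w_inv _ w_conj _ serre.
have [_ winvK _ _] := w_inv i hi.
have [wei _ _ _] := w_conj i i hi hi.
have [wej _ _ _] := w_conj j i hj hi.
have [+ _] := serre i j hi hj ij.
by rewrite exp2 (adl_iter2 winvK wei wej).
Qed.

Lemma Urs_serre_left : s != 0 -> forall k, (1 <= k < n)%N ->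
  e k * E r e k k.+1 = s ^+ 2 *: (E r e k k.+1 * e k).
Proof.
move=> s0 k hk; apply: subr0_eq.
have := Urs_serre2 (i := k) (j := k.+1) (ltac:(lia)) (ltac:(lia)) (ltac:(lia)).
rewrite pairing_up; last lia.
rewrite pairing_diag; last lia.
rewrite divfK ?expf_neq0 // => /(_ (serre_exp_up k)).
by rewrite E_rec // E_diag qcomm_swap.
Qed.

Lemma Urs_serre_right : r != 0 -> s != 0 -> forall k, (1 <= k)%N -> (k.+2 <= n)%N ->
  E r e k k.+1 * e k.+1 = s ^+ 2 *: (e k.+1 * E r e k k.+1).
Proof.
move=> r0 s0 k hk hkn; have r2_0 := expf_neq0 2 r0; have s2_0 := expf_neq0 2 s0.
have := Urs_serre2 (i := k.+1) (j := k) (ltac:(lia)) (ltac:(lia)) (ltac:(lia)).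
rewrite pairing_down; last lia.
rewrite pairing_diag; last lia.
rewrite mulrAC mulfV // mul1r serre_exp_down; last lia.
move=> /(_ erefl) serre; apply: subr0_eq.
rewrite -/(qcomm (E r e k k.+1) (e k.+1) (s ^+ 2)) (qcommV _ _ s2_0) E_rec // E_diag.
by rewrite (qcommV (e k) _ r2_0) qcommZr serre !scaler0.
Qed.

End DefiningRelations.

Theorem lemma3p3 (R : realType) (n : nat) (r s : R[i])
  (hn : (2 <= n)%N) (hr : r != 0) (hs : s != 0)
  (h3 : r ^+ 3 != s ^+ 3) (h4 : r ^+ 4 != s ^+ 4)
  (A : algType R[i]) (e f w winv w' w'inv : nat -> A)
  (hU : Urs_relations n r s e f w winv w' w'inv) :
  let Ep := E r e in
  let Epp := E' n r s e in
  (forall i l j, (1 <= i)%N -> (i < l < j)%N -> (j <= n)%N ->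
         e l * Ep i j = Ep i j * e l) /\
      (forall i l j, (1 <= i)%N -> (i < l < j)%N -> (j <= n)%N ->
         Ep i l * Ep l j - (r * s) ^+ 2 *: (Ep l j * Ep i l)
           = (s ^+ 2 - r ^+ 2) *: (e l * Ep i j)) /\
      (forall i k l j, (1 <= i)%N -> (i < k <= l)%N -> (l < j <= n)%N ->
         Ep i j * Ep k l = Ep k l * Ep i j) /\
      (forall i l j, (1 <= i)%N -> (i < l <= j)%N -> (j < n)%N ->
         Ep i j * Ep l j = s ^+ 2 *: (Ep l j * Ep i j)) /\
      (forall i l j, (1 <= i)%N -> (i <= l < j)%N -> (j <= n)%N ->
         Ep i l * Ep i j = s ^+ 2 *: (Ep i j * Ep i l)) /\
      (forall i l j, (1 <= i)%N -> (i < l)%N -> (l.+1 < j <= n)%N ->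
         e l * Epp i j = Epp i j * e l) /\
      (forall i l j, (1 <= i)%N -> (i < l)%N -> (l.+1 < j <= n)%N ->
         Ep i l * Epp l j - (r * s) ^+ 2 *: (Epp l j * Ep i l)
           = (s ^+ 2 - r ^+ 2) *: (e l * Epp i j)) /\
      (forall i k l j, (1 <= i)%N -> (i < k <= l)%N -> (l.+1 < j <= n)%N ->
         Epp i j * Ep k l = Ep k l * Epp i j) /\
      (forall i l j, (1 <= i)%N -> (i <= l)%N -> (l.+1 < j <= n)%N ->
         Ep i l * Epp i j = s ^+ 2 *: (Epp i j * Ep i l)).
Proof.
(* [h4] enters only through [r ^+ 2 + s ^+ 2 != 0]. *)
have r2s2 : r ^+ 2 + s ^+ 2 != 0.
  apply: contra h4; rewrite addr_eq0 => /eqP r2E.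
  by rewrite (exprM r 2 2) (exprM s 2 2) r2E sqrrN.
have far := Urs_e_comm_far hU.
have serre_l := Urs_serre_left hU hs.
have serre_r := Urs_serre_right hU hr hs.
move=> Ep Epp; split; first exact: (e_comm_E r2s2 far serre_l serre_r).
split; first exact: (E_overlap_qcomm r2s2 far serre_l serre_r).
split; first exact: (E_comm_nested r2s2 far serre_l serre_r).
split; first exact: (E_qcomm_right r2s2 far serre_l serre_r).
split; first exact: (E_qcomm_left r2s2 far serre_l serre_r).
split; first exact: (e_comm_E' r2s2 far serre_l serre_r).
split; first exact: (E_E'_overlap_qcomm r2s2 far serre_l serre_r).
split; first exact: (E'_comm_nested r2s2 far serre_l serre_r).
exact: (E_E'_qcomm_left r2s2 far serre_l serre_r).
Qed.
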